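(* Let $k_+,k_-$ be integers with $0\le k_-\le k_+$ and $1\leq k_++k_-\leq 2$. \begin{enumerate} \item Let $m$ be a positive integer and $n=(3^m+1)/2$. Then $\mathbb{Z}^n$ can be lattice packed by $\mathcal{B}(n,2,k_+,k_-)$ with density \[\delta = \frac{ \binom{n}{2}(k_++k_-)^2 +n(k_++k_-) +1 }{(2n-1)^2}.\] \item Let $m\geq 3$ be an odd integer and $n=(3^m-1)/2$. Then $\mathbb{Z}^n$ can be lattice packed by $\mathcal{B}(n,2,k_+,k_-)$ with density \[\delta = \frac{ \binom{n}{2}(k_++k_-)^2 +n(k_++k_-) +1 }{(2n+1)^2}.\] \end{enumerate}
   Context: $\mathcal{B}(n,t,k_+,k_-)=\{\mathbf{x}\in\mathbb{Z}^n : -k_-\le x_i\le k_+ \text{ for all } i,\ \mathrm{wt}(\mathbf{x})\le t\}$, where $\mathrm{wt}$ is the Hamming weight. A lattice packing of $\mathbb{Z}^n$ by $\mathcal{B}$ is a lattice $\Lambda\subseteq\mathbb{Z}^n$ (additive subgroup) such that the translates $\mathbf{v}+\mathcal{B}$, $\mathbf{v}\in\Lambda$, are pairwise disjoint; its density is $|\mathcal{B}|/\mathrm{vol}(\Lambda)$, where $\mathrm{vol}(\Lambda)=|\mathbb{Z}^n/\Lambda|$. *)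

From mathcomp Require Import all_boot all_order all_algebra.
Set Implicit Arguments. Unset Strict Implicit. Unset Printing Implicit Defensive.
Import Order.TTheory GRing.Theory Num.Theory.
Local Open Scope ring_scope.

Definition vec (n : nat) := 'rV[int]_n.

Definition wt (n : nat) (x : vec n) : nat := #|[set i : 'I_n | x ord0 i != 0]|.

Definition inB (n t kp km : nat) (x : vec n) : Prop :=
  (forall i : 'I_n, - (km%:Z) <= x ord0 i <= kp%:Z) /\ (wt x <= t)%N.

(* |B(n,t,k+,k-)|: B is in bijection with the vectors with entries in
   {0,...,k+ + k-} (shift every coordinate by -k-) of the corresponding weight. *)
Definition shiftv (n kp km : nat) (y : 'I_n -> 'I_(kp + km).+1) : vec n :=
  \row_i ((y i : nat)%:Z - km%:Z).
Definition B_card (n t kp km : nat) : nat :=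
  #|[set y : {ffun 'I_n -> 'I_(kp + km).+1} | (wt (shiftv y) <= t)%N]|.

Definition is_lattice (n : nat) (L : vec n -> Prop) : Prop :=
  L 0 /\ (forall u v, L u -> L v -> L (u - v)).

(* vol(L) = |Z^n / L| = N : there are N representatives, and every point of
   Z^n lies in exactly one coset r i + L. *)
Definition lattice_index (n : nat) (L : vec n -> Prop) (N : nat) : Prop :=
  exists r : 'I_N -> vec n, forall x : vec n, exists! i : 'I_N, L (x - r i).

Definition lattice_packing (n t kp km : nat) (L : vec n -> Prop) : Prop :=
  forall u v b1 b2 : vec n, L u -> L v -> inB t kp km b1 -> inB t kp km b2 ->
    u + b1 = v + b2 -> u = v.

Definition lattice_packed_with_density (n t kp km : nat) (delta : rat) : Prop :=
  exists (L : vec n -> Prop) (N : nat),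
    [/\ is_lattice L, lattice_index L N, lattice_packing t kp km L &
        (B_card n t kp km)%:R / N%:R = delta].

From HB Require Import structures.
From mathcomp Require Import all_boot all_order all_algebra fingroup.
From mathcomp Require Import cyclic finfield zify ring.
Set Implicit Arguments. Unset Strict Implicit. Unset Printing Implicit Defensive.
Import Order.TTheory GRing.Theory Num.Theory.
Local Open Scope ring_scope.

(* Let G be an abelian group of exponent 3, g_1, ..., g_n in G, and L the
   kernel of the syndrome map d |-> sum_i d_i g_i on Z^n.  If no nonzero vector
   of weight at most 4 with entries in [-2, 2] lies in L, then L packs
   B(n, 2, k+, k-) for k+ + k- <= 2, since differences of two points of B are
   such vectors.  As 3G = 0, the syndromes of {0, 1, 2}^n then form a subgroup
   of G with at least |B(n, 2, 2, 0)| elements, so L has index |G| as soon as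
   |G| < 3 |B(n, 2, 2, 0)|.
   Let a be a primitive 2n-th root of unity in a field F of characteristic 3,
   so that the a^i, i < n, are nonzero and pairwise neither equal nor opposite.
   For n = (3^m + 1)/2 take g_i = a^i in F = GF(3^2m), where Frobenius maps a^i
   to a^-i; for n = (3^m - 1)/2 take g_i = (a^i, a^-i) in GF(3^m)^2.  Either
   way a short relation yields at most four signed terms x_j = +-a^i with
   sum x_j = 0 = sum x_j^-1, which in characteristic 3 forces two of them to
   be equal or opposite. *)

(** * The size of B(n, t, k+, k-) *)

Lemma coef_XMn_add1_exp (R : comNzRingType) n k j :
  (('X *+ k + 1 : {poly R}) ^+ n)`_j = ('C(n, j) * k ^ j)%:R.
Proof.
rewrite exprD1n coef_sum.
under eq_bigr => i _ do rewrite exprMn_n -mulrnA coefMn coefXn mulrnAC mulrb eq_sym.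
rewrite -big_mkcond /=; case: (ltnP j n.+1) => [lt_jn | lt_nj].
  by rewrite (big_pred1 (Ordinal lt_jn)) // mulnC natrM mulr_natl.
by rewrite big_pred0 ?bin_small ?mul0n // => i; rewrite ltn_eqF // (leq_trans (ltn_ord i)).
Qed.

Lemma sum_ffun_Xweight n k (c : 'I_k.+1) :
  \sum_(y : {ffun 'I_n -> 'I_k.+1}) 'X^#|[set i | y i != c]|
    = ('X *+ k + 1 : {poly int}) ^+ n.
Proof.
have row_sum : \sum_(v : 'I_k.+1) (if v == c then 1 else 'X) = 'X *+ k + 1 :> {poly int}.
  rewrite (bigD1 c) //= eqxx addrC; congr (_ + _).
  rewrite (eq_bigr (fun _ => 'X)); last by move=> v /negbTE ->.
  by rewrite sumr_const cardC1 card_ord.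
rewrite -row_sum -[in RHS](card_ord n) -prodr_const bigA_distr_bigA /=.
apply: eq_bigr => y _.
rewrite (eq_bigr (fun i => if y i != c then 'X else 1)); last by move=> i _; case: eqP.
by rewrite -big_mkcond prodr_const cardsE.
Qed.

Lemma card_ffun_weight n k (c : 'I_k.+1) j :
  #|[set y : {ffun 'I_n -> 'I_k.+1} | #|[set i | y i != c]| == j]| = ('C(n, j) * k ^ j)%N.
Proof.
apply/eqP; rewrite -(eqr_nat int) -(coef_XMn_add1_exp int n k j) -(sum_ffun_Xweight n c).
rewrite coef_sum -sum1_card natr_sum big_mkcond /=; apply/eqP/eq_bigr => y _.
by rewrite coefXn inE eq_sym; case: eqP.
Qed.

Lemma wt_shiftv n kp km (y : 'I_n -> 'I_(kp + km).+1) :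
  wt (shiftv y) = #|[set i | y i != inord km]|.
Proof.
apply: eq_card => i; rewrite !inE mxE subr_eq0 -(inj_eq val_inj) /= inordK //.
by rewrite ltnS leq_addl.
Qed.

Lemma B_cardE n t kp km :
  B_card n t kp km = (\sum_(j < t.+1) 'C(n, j) * (kp + km) ^ j)%N.
Proof.
pose weight (y : {ffun 'I_n -> 'I_(kp + km).+1}) : 'I_t.+1 := inord (wt (shiftv y)).
rewrite /B_card -sum1_card (partition_big weight predT) //=.
apply: eq_bigr => j _; rewrite -(card_ffun_weight _ (inord km)) -sum1_card.
apply: eq_bigl => y; rewrite !inE /weight wt_shiftv -(inj_eq val_inj) /=.
case: leqP => [w_le | w_gt] /=; first by rewrite inordK.
by rewrite gtn_eqF // (leq_trans _ w_gt) // -ltnS.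
Qed.

Lemma bin2_mul2 n : ('C(n, 2) * 2 = n * n.-1)%N.
Proof. by elim: n => [|[|n] IHn] //; rewrite binS bin1 mulnDl IHn /=; nia. Qed.

Lemma B_card_weight2 n kp km :
  B_card n 2 kp km = ('C(n, 2) * (kp + km) ^ 2 + n * (kp + km) + 1)%N.
Proof. by rewrite B_cardE !big_ord_recr big_ord0 /= bin0 bin1; ring. Qed.

(** * Lattices as kernels of syndrome maps *)

Section KernelLattice.
Variables (n : nat) (G : zmodType) (phi : {additive 'rV[int]_n -> G}).

Lemma kernel_is_lattice : is_lattice (fun x => phi x = 0).
Proof. by split=> [|u v]; rewrite ?raddf0 // raddfB => -> ->; rewrite subrr. Qed.

Lemma kernel_lattice_packing t kp km :
    (forall b1 b2, inB t kp km b1 -> inB t kp km b2 -> phi b1 = phi b2 -> b1 = b2) ->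
  lattice_packing t kp km (fun x => phi x = 0).
Proof.
move=> phi_inj u v b1 b2 u0 v0 B1 B2 e.
have phi_b : phi b1 = phi b2 by have := congr1 phi e; rewrite !raddfD u0 v0 !add0r.
by move: e; rewrite (phi_inj _ _ B1 B2 phi_b) => /addIr.
Qed.

End KernelLattice.

Lemma kernel_lattice_index n (G : finZmodType) (phi : {additive 'rV[int]_n -> G}) :
  (forall y, exists x, phi x = y) -> lattice_index (fun x => phi x = 0) #|G|.
Proof.
move=> phi_surj; have preim y : exists x, phi x == y.
  by have [x <-] := phi_surj y; exists x.
exists (fun i : 'I_#|G| => xchoose (preim (enum_val i))) => x.
have phi_r (i : 'I_#|G|) : phi (xchoose (preim (enum_val i))) = enum_val i.
  exact: (eqP (xchooseP (preim _))).
exists (enum_rank (phi x)); split=> [|i]; rewrite raddfB phi_r ?enum_rankK ?subrr //.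
by move/eqP; rewrite subr_eq0 => /eqP ->; rewrite enum_valK.
Qed.

Section Syndrome.
Variables (n : nat) (G : zmodType) (g : 'I_n -> G).

Definition syndrome (d : 'rV[int]_n) : G := \sum_i g i *~ d ord0 i.

Fact syndrome_is_zmod_morphism : zmod_morphism syndrome.
Proof.
by move=> u v; rewrite /syndrome -sumrB; apply: eq_bigr => i _; rewrite !mxE mulrzBr.
Qed.

HB.instance Definition _ :=
  GRing.isZmodMorphism.Build 'rV[int]_n G syndrome syndrome_is_zmod_morphism.

End Syndrome.

Lemma wt_subr n (u v : 'rV[int]_n) : (wt (u - v)%R <= wt u + wt v)%N.
Proof.
apply: leq_trans (leq_card_setU _ _); apply/subset_leq_card/subsetP => i.
rewrite !inE mxE; apply: contraR; rewrite negb_or !negbK => /andP[/eqP u0 /eqP v0].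
by rewrite mxE u0 v0 subr0.
Qed.

Lemma int_subr_bounds (kp km : nat) (a b : int) :
    - km%:Z <= a <= kp%:Z -> - km%:Z <= b <= kp%:Z ->
  - (kp + km)%:Z <= a - b <= (kp + km)%:Z.
Proof. lia. Qed.

Lemma inB_subr n t kp km (b1 b2 : 'rV[int]_n) : inB t kp km b1 -> inB t kp km b2 ->
  (wt (b1 - b2)%R <= t + t)%N /\
  (forall i, - (kp + km)%:Z <= (b1 - b2) ord0 i <= (kp + km)%:Z).
Proof.
move=> [b1_bd wt_b1] [b2_bd wt_b2]; split; first exact: leq_trans (wt_subr _ _) (leq_add _ _).
move=> i; rewrite !mxE; apply: int_subr_bounds; [exact: b1_bd | exact: b2_bd].
Qed.

Definition relation_free n (G : zmodType) (g : 'I_n -> G) (w k : nat) :=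
  forall d : vec n, (wt d <= w)%N -> (forall i, - k%:Z <= d ord0 i <= k%:Z) ->
  syndrome g d = 0 -> d = 0.

Lemma relation_free_inB_inj n (G : zmodType) (g : 'I_n -> G) t kp km k :
    relation_free g (t + t) k -> (kp + km <= k)%N ->
  forall b1 b2, inB t kp km b1 -> inB t kp km b2 -> syndrome g b1 = syndrome g b2 -> b1 = b2.
Proof.
move=> g_free k_ge b1 b2 B1 B2 e; have [wt_b d_bd] := inB_subr B1 B2.
apply/eqP; rewrite -subr_eq0; apply/eqP/g_free => [//|i|]; last by rewrite raddfB /= e subrr.
have /andP[lo hi] := d_bd i; have k_ge_Z : (kp + km)%:Z <= k%:Z by rewrite lez_nat.
by rewrite (le_trans _ lo) ?(le_trans hi) ?lerN2.
Qed.

Lemma shiftv_inj n kp km : injective (fun y : {ffun 'I_n -> 'I_(kp + km).+1} => shiftv y).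
Proof.
move=> y y' /matrixP e; apply/ffunP => i; apply/val_inj/eqP.
by have := e ord0 i; rewrite !mxE => /addIr /eqP.
Qed.

Lemma inB_shiftv n t kp km (y : 'I_n -> 'I_(kp + km).+1) :
  (wt (shiftv y) <= t)%N -> inB t kp km (shiftv y).
Proof.
split=> // i; rewrite mxE.
have : (y i < (kp + km).+1)%N := ltn_ord (y i).
lia.
Qed.

Lemma syndrome_shiftv n (G : zmodType) (g : 'I_n -> G) k (y : 'I_n -> 'I_(k + 0).+1) :
  syndrome g (shiftv y) = \sum_i g i *+ y i.
Proof. by apply: eq_bigr => i _; rewrite !mxE subr0. Qed.

(* The translates I, y + I and -y + I are pairwise disjoint when y is not in I. *)
Lemma exponent3_addr_closed_setT (G : finZmodType) (I : {set G}) :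
    (forall x : G, x *+ 3 = 0) -> 0 \in I -> {in I &, forall a b, a + b \in I} ->
  (#|G| < 3 * #|I|)%N -> I = [set: G].
Proof.
move=> G3 I0 ID big; apply/setP => y; rewrite inE; apply: contraTT big => yI.
rewrite -leqNgt.
have double (x : G) : - x = x + x.
  by apply/eqP; rewrite eq_sym -addr_eq0 -(G3 x) !mulrS mulr0n addr0 addrA.
have IN a : a \in I -> - a \in I by move=> aI; rewrite double ID.
pose C z := [set z + a | a in I].
have cardC z : #|C z| = #|I| by apply/card_imset/addrI.
have disjC z1 z2 : z1 - z2 \notin I -> C z1 :&: C z2 = set0.
  move=> zI; apply/setP => x; rewrite !inE; apply/negbTE; apply: contra zI.
  case/andP=> /imsetP[a aI ->] /imsetP[b bI] e.
  have -> : z1 - z2 = b - a by apply/eqP; rewrite subr_eq addrAC [b + _]addrC -e addrK.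
  by rewrite ID ?IN.
have yN : - y \notin I by apply: contra yI => /IN; rewrite opprK.
have yy : y + y \notin I by rewrite -double.
have C0y : C 0 :&: C y = set0 by rewrite disjC ?sub0r.
have CyN : (C 0 :|: C y) :&: C (- y) = set0.
  by rewrite setIUl !disjC ?setU0 ?sub0r ?opprK.
apply: leq_trans (max_card (C 0 :|: C y :|: C (- y))).
by rewrite cardsU CyN cardsU C0y !cards0 !subn0 !cardC; lia.
Qed.

Lemma syndrome_surj n (G : finZmodType) (g : 'I_n -> G) :
    (forall x : G, x *+ 3 = 0) -> relation_free g 4 2 ->
    (#|G| < 3 * B_card n 2 2 0)%N ->
  forall y, exists x, syndrome g x = y.
Proof.
move=> G3 g_free G_small y.
have mulrn_mod3 (x : G) k : x *+ (k %% 3) = x *+ k.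
  by rewrite [in RHS](divn_eq k 3) mulrnDr mulrnA G3 add0r.
pose I := [set syndrome g (shiftv f) | f : {ffun 'I_n -> 'I_(2 + 0).+1}].
have /setP/(_ y) : I = [set: G].
  apply: exponent3_addr_closed_setT => //.
  - apply/imsetP; exists [ffun => ord0] => //.
    by rewrite syndrome_shiftv big1 // => i _; rewrite ffunE.
  - move=> _ _ /imsetP[f _ ->] /imsetP[f' _ ->]; apply/imsetP.
    exists [ffun i => inZp (f i + f' i)] => //; rewrite !syndrome_shiftv -big_split.
    by apply: eq_bigr => i _; rewrite ffunE /= mulrn_mod3 mulrnDr.
  - pose S := fun f : {ffun 'I_n -> 'I_(2 + 0).+1} => syndrome g (shiftv f).
    apply: leq_trans G_small _; rewrite leq_mul2l /B_card -(card_in_imset (f := S)).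
      by apply/subset_leq_card/imsetS/subsetP.
    move=> f f'; rewrite !inE => wt_f wt_f' e; apply: shiftv_inj.
    apply: (relation_free_inB_inj (t := 2) (kp := 2) (km := 0) g_free) e => //.
    + exact: inB_shiftv wt_f.
    + exact: inB_shiftv wt_f'.
by rewrite inE => /imsetP[f _ ->]; exists (shiftv f).
Qed.

Theorem syndrome_lattice_packing n (G : finZmodType) (g : 'I_n -> G) kp km :
    (forall x : G, x *+ 3 = 0) -> relation_free g 4 2 ->
    (#|G| < 3 * B_card n 2 2 0)%N -> (kp + km <= 2)%N ->
  lattice_packed_with_density n 2 kp km ((B_card n 2 kp km)%:R / #|G|%:R).
Proof.
move=> G3 g_free G_small k_le.
exists (fun x => syndrome g x = 0), #|G|; split=> //.
- exact: kernel_is_lattice.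
- exact/kernel_lattice_index/syndrome_surj.
- exact/kernel_lattice_packing/(relation_free_inB_inj (t := 2) g_free).
Qed.

(** * Short relations in characteristic 3 *)

(* e1 = e3 = 0 makes the polynomial with roots x, y, z, w even, so its roots
   pair off into opposites. *)
Lemma sum_inv4_eq0 (F : fieldType) (x y z w : F) :
  x != 0 -> y != 0 -> z != 0 -> w != 0 ->
  x + y + z + w = 0 -> x^-1 + y^-1 + z^-1 + w^-1 = 0 ->
  [\/ x = - y, x = - z | x = - w].
Proof.
move=> x0 y0 z0 w0 s0 i0.
have [xy|xy] := eqVneq (x + y) 0; first by apply: Or31; rewrite -(addrK y x) xy sub0r.
have e3 : z * w * (x + y) + x * y * (z + w) = 0.
  have -> : z * w * (x + y) + x * y * (z + w)
      = x * y * z * w * (x^-1 + y^-1 + z^-1 + w^-1) by field; rewrite x0 y0 z0 w0.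
  by rewrite i0 mulr0.
have zw : z + w = - (x + y) by apply/eqP; rewrite -addr_eq0 addrC !addrA s0.
move: e3; rewrite zw mulrN -mulNr -mulrDl => /eqP.
rewrite mulf_eq0 (negbTE xy) orbF subr_eq0 => /eqP e2.
have : (x + z) * (x + w) = 0.
  have -> : (x + z) * (x + w) = x * (x + y + z + w) - x * y + z * w by ring.
  by rewrite s0 e2; ring.
by move/eqP; rewrite mulf_eq0 !addr_eq0 => /orP[]/eqP; [apply: Or32 | apply: Or33].
Qed.

Section CharacteristicThree.
Variable F : fieldType.
Hypothesis pcharF3 : 3 \in [pchar F].

(* In characteristic 3, e1 = e2 = 0 gives (X - x)(X - y)(X - z) = X^3 - x^3 = (X - x)^3. *)
Lemma sum_inv3_eq0 (x y z : F) : x != 0 -> y != 0 -> z != 0 ->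
  x + y + z = 0 -> x^-1 + y^-1 + z^-1 = 0 -> x = y.
Proof.
move=> x0 y0 z0 s0 i0.
have e2 : y * z + x * z + x * y = 0.
  have -> : y * z + x * z + x * y = x * y * z * (x^-1 + y^-1 + z^-1).
    by field; rewrite x0 y0 z0.
  by rewrite i0 mulr0.
have : (x - y) ^+ 2 = 0.
  have -> : (x - y) ^+ 2 = - (y * z + x * z + x * y) + (x + y + z) * (x + y)
                            - 3%:R * x * y by ring.
  by rewrite e2 s0 (pcharf0 pcharF3); ring.
by move/eqP; rewrite expf_eq0 /= subr_eq0 => /eqP.
Qed.

Lemma int_pchar3_sign (c : int) : c != 0 -> -2 <= c <= 2 ->
  c%:~R = 1 :> F \/ c%:~R = -1 :> F.
Proof.
have two : 2%:~R = -1 :> F.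
  by apply/eqP; rewrite -addr_eq0 -(natrD F 2 1) (pcharf0 pcharF3).
move=> c0 /andP[c_ge c_le].
have : [|| c == 1, c == -1, c == 2 | c == -2] by lia.
case/or4P=> /eqP ->.
- by left.
- by right.
- by right.
- by left; rewrite mulrNz two opprK.
Qed.

Lemma short_zero_sums_nil (s : seq F) : all (fun x => x != 0) s ->
  pairwise (fun x y => (x != y) && (x != - y)) s -> (size s <= 4)%N ->
  \sum_(x <- s) x = 0 -> \sum_(x <- s) x^-1 = 0 -> s = [::].
Proof.
case: s => [// | x [|y [|z [|w [|? ?]]]]] /=; rewrite ?big_cons ?big_nil ?addr0 ?addrA //.
- by move=> /andP[/negPf x0 _] _ _ /eqP; rewrite x0.
- by move=> _ /andP[/andP[/andP[_ xy] _] _] _ /eqP; rewrite addr_eq0 (negPf xy).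
- move=> /and4P[x0 y0 z0 _] /and3P[/and3P[/andP[/negPf xy _] _ _] _ _] _ s0 i0.
  by have := sum_inv3_eq0 x0 y0 z0 s0 i0; move/eqP; rewrite xy.
- move=> /and5P[x0 y0 z0 w0 _] /and4P[/and4P[/andP[_ xy] /andP[_ xz] /andP[_ xw] _] _ _ _].
  move=> _ s0 i0; case: (sum_inv4_eq0 x0 y0 z0 w0 s0 i0) => /eqP.
  + by rewrite (negPf xy).
  + by rewrite (negPf xz).
  + by rewrite (negPf xw).
Qed.

Lemma small_relation_inv_eq0 n (h : 'I_n -> F) :
    (forall i, h i != 0) -> (forall i j, i != j -> h i != h j /\ h i != - h j) ->
  forall d : vec n, (wt d <= 4)%N -> (forall i, -2 <= d ord0 i <= 2) ->
  \sum_i h i *~ d ord0 i = 0 -> \sum_i (h i)^-1 *~ d ord0 i = 0 -> d = 0.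
Proof.
move=> h0 h_sep d wt_d d_bd s1 s2.
pose J := [set i | d ord0 i != 0].
pose c i : F := (d ord0 i)%:~R.
have cJ i : i \in J -> c i = 1 \/ c i = -1.
  by rewrite inE => /int_pchar3_sign; apply.
have sumJ (f : 'I_n -> F) : \sum_(i <- enum J) c i * f i = \sum_i f i *~ d ord0 i.
  rewrite big_enum big_mkcond /=; apply: eq_bigr => i _; rewrite inE mulrzl.
  by case: eqP => // ->; rewrite mulr0z.
pose s := [seq c i * h i | i <- enum J].
have : s = [::].
  apply: short_zero_sums_nil.
  - rewrite all_map; apply/allP => i; rewrite mem_enum => /cJ[] /= ->.
    + by rewrite mul1r.
    + by rewrite mulN1r oppr_eq0.
  - have := enum_uniq (mem J); rewrite uniq_pairwise pairwise_map.
    apply: (@sub_in_pairwise _ (mem J)); last by apply/allP => i; rewrite mem_enum.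
    move=> i j /cJ ci /cJ cj /= /h_sep[hij hiNj].
    by case: ci cj => -> [] ->; rewrite ?mul1r ?mulN1r ?eqr_opp ?eqr_oppLR ?opprK hij hiNj.
  - by rewrite size_map -cardE.
  - by rewrite big_map sumJ.
  - rewrite big_map -[RHS]s2 -sumJ; apply: eq_big_seq => i; rewrite mem_enum => /cJ[]->.
    + by rewrite !mul1r.
    + by rewrite !mulN1r invrN.
move/(congr1 size); rewrite size_map -cardE => /eqP; rewrite cards_eq0 => /eqP J0.
apply/matrixP => i j; rewrite ord1 !mxE.
by apply/eqP; apply: contraT => dj; have := in_set0 j; rewrite -J0 inE dj.
Qed.

End CharacteristicThree.

(** * Roots of unity and the two constructions *)

Lemma finField_prim_root_exists (F : finFieldType) :
  exists g : F, #|F|.-1.-primitive_root g.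
Proof.
have /cyclicP[x Dx] := field_unit_group_cyclic [set: {unit F}]%G.
have ox : #[x]%g = #|F|.-1 by rewrite -card_finField_unit Dx.
have xE k : (FinRing.uval x ^+ k == 1) = (#|F|.-1 %| k)%N.
  by rewrite -ox order_dvdn -(inj_eq val_inj) FinRing.val_unitX.
have x1 : FinRing.uval x ^+ #|F|.-1 = 1 by apply/eqP; rewrite xE.
have [m prim_m m_dvd] := prim_order_exists (order_gt0 x) (etrans (congr1 _ ox) x1).
exists (FinRing.uval x); suff <- : m = #|F|.-1 by [].
by apply/eqP; rewrite eqn_dvd -ox m_dvd ox -xE; apply/eqP; apply: prim_expr_order.
Qed.

Section HalfOrderRoot.
Variables (R : idomainType) (n : nat) (a : R).
Hypothesis prim_a : (2 * n).-primitive_root a.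

Lemma prim_root_half_expr : a ^+ n = -1.
Proof.
have n_gt0 : (0 < n)%N by have := prim_order_gt0 prim_a; rewrite muln_gt0.
have : (a ^+ n - 1) * (a ^+ n + 1) = 0.
  by rewrite -subr_sqr -exprM mulnC (prim_expr_order prim_a) expr1n subrr.
move/eqP; rewrite mulf_eq0 subr_eq0 addr_eq0 => /orP[|/eqP //].
rewrite -{1}(expr0 a) (eq_prim_root_expr prim_a) mod0n modn_small ?gtn_eqF //; lia.
Qed.

Lemma prim_root_half_exprs_distinct (i j : 'I_n) :
  i != j -> a ^+ i != a ^+ j /\ a ^+ i != - a ^+ j.
Proof.
move=> ij; have lt2n (k : 'I_n) : (k < 2 * n)%N by have := ltn_ord k; lia.
split; first by rewrite (eq_prim_root_expr prim_a) !modn_small.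
rewrite -mulN1r -prim_root_half_expr -exprD (eq_prim_root_expr prim_a).
by rewrite !modn_small //; have := ltn_ord i; have := ltn_ord j; lia.
Qed.

End HalfOrderRoot.

Lemma expr_pchar_sumz (R : comNzRingType) p (pcharRp : p \in [pchar R]) k
    (I : Type) (r : seq I) (x : I -> R) (z : I -> int) :
  (\sum_(i <- r) x i *~ z i) ^+ (p ^ k)%N = \sum_(i <- r) x i ^+ (p ^ k)%N *~ z i.
Proof.
elim: k => [|k IHk]; first by rewrite expn0; apply: eq_bigr => i _; rewrite expr1.
rewrite expnSr exprM IHk -(pFrobenius_autE pcharRp) rmorph_sum; apply: eq_bigr => i _.
by rewrite rmorphMz /= pFrobenius_autE -exprM.
Qed.

(* The product of two finite Z-modules is not canonically a finZmodType. *)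
HB.instance Definition _ (U V : finZmodType) := GRing.Zmodule.on (U * V)%type.

Section RootOfUnityCodes.
Variables (F : fieldType) (n : nat) (a : F).
Hypotheses (pcharF3 : 3 \in [pchar F]) (prim_a : (2 * n).-primitive_root a).

Let a_neq0 (i : nat) : a ^+ i != 0.
Proof. by rewrite expf_neq0 // (prim_root_eq0 prim_a) -lt0n (prim_order_gt0 prim_a). Qed.

Lemma relation_free_inv_pairs : relation_free (fun i : 'I_n => (a ^+ i, a ^- i)) 4 2.
Proof.
move=> d wt_d d_bd s0.
apply: (small_relation_inv_eq0 pcharF3 (h := fun i => a ^+ i)) => //.
- exact: prim_root_half_exprs_distinct.
- apply: etrans (congr1 fst s0); rewrite raddf_sum.
  by apply: eq_bigr => i _; rewrite raddfMz.
- apply: etrans (congr1 snd s0); rewrite raddf_sum.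
  by apply: eq_bigr => i _; rewrite raddfMz.
Qed.

Lemma relation_free_frobenius k : (2 * n = 3 ^ k + 1)%N ->
  relation_free (fun i : 'I_n => a ^+ i) 4 2.
Proof.
move=> nk d wt_d d_bd s0.
apply: (small_relation_inv_eq0 pcharF3 (h := fun i => a ^+ i)) => //.
- exact: prim_root_half_exprs_distinct.
- have frob_inv (i : 'I_n) : (a ^+ i)^-1 = a ^+ i ^+ (3 ^ k)%N.
    apply: (mulIf (a_neq0 i)); rewrite mulVf // -exprSr -exprM mulnC.
    by rewrite -addn1 -nk exprM (prim_expr_order prim_a) expr1n.
  have s1 : \sum_(i < n) a ^+ i *~ d ord0 i = 0 := s0.
  under eq_bigr => i _ do rewrite frob_inv.
  by rewrite -(expr_pchar_sumz pcharF3) s1 expr0n expn_eq0.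
Qed.

End RootOfUnityCodes.

Lemma lattice_packed_norm_one_roots m n kp km :
    (0 < m)%N -> (2 * n = 3 ^ m + 1)%N -> (kp + km <= 2)%N ->
  lattice_packed_with_density n 2 kp km ((B_card n 2 kp km)%:R / ((3 ^ m) ^ 2)%:R).
Proof.
move=> m_gt0 nq k_le.
have m2_gt0 : (0 < m * 2)%N by rewrite muln_gt0 m_gt0.
have [F pcharF cardF] := @pPrimePowerField 3 (m * 2) isT m2_gt0.
have [g prim_g] := finField_prim_root_exists F.
have n_dvd : (2 * n %| #|F|.-1)%N.
  by rewrite cardF expnM -subn1 -[X in (_ - X)%N](exp1n 2) subn_sqr -nq dvdn_mull.
pose a := g ^+ (#|F|.-1 %/ (2 * n)).
have prim_a : (2 * n).-primitive_root a := dvdn_prim_root prim_g n_dvd.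
rewrite -expnM -cardF.
apply: (syndrome_lattice_packing (g := fun i : 'I_n => a ^+ i)) => //.
- exact: mulrn_pchar pcharF.
- exact (relation_free_frobenius pcharF prim_a nq).
- rewrite cardF B_card_weight2 expnM; have := bin2_mul2 n; nia.
Qed.

Lemma lattice_packed_inverse_pairs m n kp km :
    (1 < m)%N -> (2 * n + 1 = 3 ^ m)%N -> (kp + km <= 2)%N ->
  lattice_packed_with_density n 2 kp km ((B_card n 2 kp km)%:R / ((3 ^ m) ^ 2)%:R).
Proof.
move=> m_gt1 nq k_le.
have [F pcharF cardF] := @pPrimePowerField 3 m isT (ltnW m_gt1).
have [g prim_g] := finField_prim_root_exists F.
rewrite cardF -nq addn1 /= in prim_g.
rewrite -cardF -mulnn -card_prod.
apply: (syndrome_lattice_packing (g := fun i : 'I_n => (g ^+ i, g ^- i))) => //.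
- move=> [x y]; rewrite (_ : (x, y) *+ 3 = (x *+ 3, y *+ 3)) //.
  by rewrite !(mulrn_pchar pcharF).
- exact: relation_free_inv_pairs pcharF prim_g.
- rewrite card_prod cardF B_card_weight2; have := bin2_mul2 n.
  have : (3 ^ 2 <= 3 ^ m)%N by rewrite leq_exp2l.
  nia.
Qed.

Theorem corollary3 (kp km : nat) :
  (km <= kp)%N -> (1 <= kp + km <= 2)%N ->
  (forall m : nat, (0 < m)%N ->
     let n := ((3 ^ m + 1) %/ 2)%N in
     lattice_packed_with_density n 2 kp km
       (('C(n, 2) * (kp + km) ^ 2 + n * (kp + km) + 1)%:R
          / ((2 * n - 1) ^ 2)%:R)) /\
  (forall m : nat, (3 <= m)%N -> odd m ->
     let n := ((3 ^ m - 1) %/ 2)%N in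
     lattice_packed_with_density n 2 kp km
       (('C(n, 2) * (kp + km) ^ 2 + n * (kp + km) + 1)%:R
          / ((2 * n + 1) ^ 2)%:R)).
Proof.
move=> _ /andP[_ k_le]; have odd3m m : odd (3 ^ m) by rewrite oddX orbT.
split=> [m m_gt0 n | m m_ge3 _ n]; rewrite -B_card_weight2.
- have nq : (2 * n = 3 ^ m + 1)%N by rewrite mulnC divnK // dvdn2 oddD odd3m.
  by rewrite nq addnK; apply: lattice_packed_norm_one_roots.
- have nq : (2 * n + 1 = 3 ^ m)%N.
    by rewrite mulnC divnK ?subnK ?expn_gt0 // dvdn2 oddB ?odd3m ?expn_gt0.
  by rewrite nq; apply: lattice_packed_inverse_pairs => //; apply: leq_trans m_ge3.
Qed.
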